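(* Let $\mathbf{u}=(u_n)_{n\in\mathbb{N}}$ be a strictly increasing sequence of positive integers with $Q_\mathbf{u}<\infty$. Then the topology $\tau_\mathbf{u}$ on $\mathbb{T}$ is discrete; more precisely, $B^{\varrho_\mathbf{u}}_{1/(2Q_\mathbf{u})}(0)=\{0\}$ in $\mathbb{T}$.
   Context: $\mathbb{T}=\mathbb{R}/\mathbb{Z}$, $\|x\|$ is the distance from $x$ to the nearest integer and $d(x,y)=\|x-y\|$. The ratios of $\mathbf{u}$ are $q_0=u_0$ and $q_n=u_n/u_{n-1}$ for $n>0$; $Q_\mathbf{u}=\sup_n q_n$. For $x,y\in\mathbb{T}$, $\varrho_\mathbf{u}(x,y)=\sup_n\max\{d(x,y),d(u_nx,u_ny)\}$; $\tau_\mathbf{u}$ is the topology on $\mathbb{T}$ induced by this metric and $B^{\varrho_\mathbf{u}}_\varepsilon(0)=\{x\in\mathbb{T}:\varrho_\mathbf{u}(x,0)<\varepsilon\}$. *)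

From Stdlib Require Import Reals Lra.
From Coquelicot Require Import Coquelicot.
Open Scope R_scope.

(* The circle T = R/Z is modelled by real representatives; two reals
   denote the same point of T iff their difference is an integer. *)
Definition T_eq (x y : R) : Prop := exists k : Z, x - y = IZR k.

Definition tnorm (x : R) : R := Rmin (frac_part x) (1 - frac_part x).

Definition tdist (x y : R) : R := tnorm (x - y).

Definition ratio (u : nat -> nat) (n : nat) : R :=
  match n with
  | O => INR (u O)
  | S m => INR (u (S m)) / INR (u m)
  end.

Definition Qu (u : nat -> nat) : Rbar :=
  Lub_Rbar (fun r => exists n, r = ratio u n).

(* rho_u(x,y) = sup_n max{ d(x,y), d(u_n x, u_n y) }  (bounded by 1/2) *)
Definition rho (u : nat -> nat) (x y : R) : R :=
  real (Lub_Rbar (fun r => exists n,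
          r = Rmax (tdist x y) (tdist (INR (u n) * x) (INR (u n) * y)))).

(* Let y be the representative of x nearest to 0, so |y| = ||x||. Since
   u_(n+1) <= Q u_n, the bound |u_n y| < 1/(2Q) gives |u_(n+1) y| < 1/2, where
   ||.|| coincides with |.|; hence ||u_n x|| < 1/(2Q) for all n propagates to
   |u_n y| < 1/(2Q) for all n. As u_n >= n, this forces y = 0. *)

From Stdlib Require Import Reals Lra Lia FunctionalExtensionality PropExtensionality.
From Coquelicot Require Import Coquelicot.
Open Scope R_scope.

Lemma up_add_IZR x k : up (x + IZR k) = (up x + k)%Z.
Proof. symmetry; apply tech_up; rewrite plus_IZR; destruct (archimed x); lra. Qed.

Lemma frac_part_add_IZR x k : frac_part (x + IZR k) = frac_part x.
Proof.
  unfold frac_part, Int_part.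
  rewrite up_add_IZR, !minus_IZR, plus_IZR; ring.
Qed.

Lemma frac_part_id y : 0 <= y < 1 -> frac_part y = y.
Proof.
  intro Hy; unfold frac_part, Int_part.
  assert (up y = 1%Z) as -> by (symmetry; apply tech_up; simpl; lra).
  simpl; lra.
Qed.

Lemma tnorm_add_IZR x k : tnorm (x + IZR k) = tnorm x.
Proof. unfold tnorm; now rewrite frac_part_add_IZR. Qed.

Lemma tnorm_abs y : Rabs y <= 1/2 -> tnorm y = Rabs y.
Proof.
  intro Hy; unfold tnorm, Rmin.
  destruct (Rle_lt_dec 0 y).
  - rewrite Rabs_right in * by lra.
    rewrite frac_part_id by lra; destruct Rle_dec; lra.
  - rewrite Rabs_left in * by lra.
    replace y with ((y + 1) + IZR (-1)) by (simpl; ring).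
    rewrite frac_part_add_IZR, frac_part_id by lra; destruct Rle_dec; lra.
Qed.

Lemma tnorm_IZR k : tnorm (IZR k) = 0.
Proof.
  rewrite <- (Rplus_0_l (IZR k)), tnorm_add_IZR, tnorm_abs; rewrite Rabs_R0; lra.
Qed.

Lemma tnorm_bounds x : 0 <= tnorm x <= 1/2.
Proof. unfold tnorm, Rmin; destruct (base_fp x); destruct Rle_dec; lra. Qed.

Lemma tnorm_nearest_int x : exists k, tnorm x = Rabs (x - IZR k).
Proof.
  unfold tnorm, Rmin; destruct (base_fp x); unfold frac_part in *.
  destruct Rle_dec.
  - exists (Int_part x); rewrite Rabs_right; lra.
  - exists (Int_part x + 1)%Z; rewrite plus_IZR, Rabs_left; lra.
Qed.

Lemma tnorm_INR_mul_sub_IZR (n : nat) x k :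
  tnorm (INR n * (x - IZR k)) = tnorm (INR n * x).
Proof.
  rewrite <- (tnorm_add_IZR _ (Z.of_nat n * k)), mult_IZR, <- INR_IZR_INZ.
  f_equal; ring.
Qed.

Lemma Lub_Rbar_real_bounds (E : R -> Prop) (M r : R) :
  (forall x, E x -> x <= M) -> E r ->
  r <= real (Lub_Rbar E) <= M.
Proof.
  intros HM Hr; destruct (Lub_Rbar_correct E) as [ub lub].
  assert (Hle : Rbar_le (Lub_Rbar E) M) by (apply lub; intros x Hx; apply HM, Hx).
  assert (Hge := ub r Hr).
  destruct (Lub_Rbar E); simpl in *; try tauto; lra.
Qed.

Lemma rho_bounds u x y n :
  Rmax (tdist x y) (tdist (INR (u n) * x) (INR (u n) * y)) <= rho u x y <= 1/2.
Proof.
  apply Lub_Rbar_real_bounds; [|now exists n].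
  intros r [m ->]; unfold tdist; apply Rmax_lub; apply tnorm_bounds.
Qed.

Lemma rho_0_ge u x n : Rmax (tnorm x) (tnorm (INR (u n) * x)) <= rho u x 0.
Proof.
  pose proof (proj1 (rho_bounds u x 0 n)) as H; unfold tdist in H.
  now rewrite Rmult_0_r, !Rminus_0_r in H.
Qed.

Lemma rho_IZR_0 u k : rho u (IZR k) 0 = 0.
Proof.
  assert (Hterm : forall n,
    Rmax (tdist (IZR k) 0) (tdist (INR (u n) * IZR k) (INR (u n) * 0)) = 0).
  { intro n; unfold tdist.
    rewrite Rminus_0_r, Rmult_0_r, Rminus_0_r, INR_IZR_INZ, <- mult_IZR, !tnorm_IZR.
    apply Rmax_left; lra. }
  apply Rle_antisym; [|pose proof (rho_bounds u (IZR k) 0 O); rewrite Hterm in *; lra].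
  apply (Lub_Rbar_real_bounds _ 0 0).
  - intros r [n ->]; rewrite Hterm; lra.
  - exists O; now rewrite Hterm.
Qed.

Lemma rho_sub_0 u x y : rho u (x - y) 0 = rho u x y.
Proof.
  unfold rho; do 2 f_equal; apply functional_extensionality; intro r.
  apply propositional_extensionality.
  split; intros [n ->]; exists n; unfold tdist; do 2 f_equal; ring.
Qed.

Lemma ratio_le_Qu u n : is_finite (Qu u) -> ratio u n <= real (Qu u).
Proof.
  intro hQ; destruct (Lub_Rbar_correct (fun r => exists n, r = ratio u n)) as [ub _].
  assert (H := ub _ (ex_intro _ n eq_refl)); fold (Qu u) in H.
  now rewrite <- hQ in H.
Qed.

Lemma abs_mul_lt_half (a b Q y : R) :
  0 < Q -> 0 <= a -> 0 <= b <= Q * a ->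
  Rabs (a * y) < 1 / (2 * Q) -> Rabs (b * y) < 1/2.
Proof.
  intros HQ Ha Hb Hay.
  assert (Hc : Q * (1 / (2 * Q)) = 1/2) by (field; lra).
  rewrite Rabs_mult, Rabs_right in Hay by lra.
  rewrite Rabs_mult, Rabs_right by lra.
  assert (0 <= Rabs y) by apply Rabs_pos.
  nra.
Qed.

Lemma eq_0_of_INR_mul_bounded y M : (forall n, INR n * Rabs y <= M) -> y = 0.
Proof.
  intro HM; destruct (Req_dec y 0) as [|Hy]; [easy|exfalso].
  destruct (INR_archimed (Rabs y) M (Rabs_pos_lt _ Hy)) as [n Hn].
  specialize (HM n); lra.
Qed.

Section BoundedRatios.

Variables (u : nat -> nat) (Q : R).
Hypothesis hpos : forall n, (0 < u n)%nat.
Hypothesis hinc : forall n, (u n < u (S n))%nat.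
Hypothesis hratio : forall n, ratio u n <= Q.

Let c := 1 / (2 * Q).

Lemma ratio_bound_pos : 0 < Q.
Proof. assert (H := hratio O); simpl in H; assert (H0 := lt_0_INR _ (hpos O)); lra. Qed.

Lemma u_succ_le n : INR (u (S n)) <= Q * INR (u n).
Proof.
  assert (Hn := lt_0_INR _ (hpos n)); assert (H := hratio (S n)); simpl in H.
  apply Rmult_le_compat_r with (r := INR (u n)) in H; [|lra].
  replace (INR (u (S n)) / INR (u n) * INR (u n)) with (INR (u (S n))) in H
    by (field; lra); lra.
Qed.

Lemma le_u n : (n <= u n)%nat.
Proof. induction n; [lia|]; specialize (hinc n); lia. Qed.

Lemma abs_u_mul_lt y :
  Rabs y < c -> (forall n, tnorm (INR (u n) * y) < c) ->
  forall n, Rabs (INR (u n) * y) < c.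
Proof.
  intros H0 Hn; pose proof ratio_bound_pos.
  induction n as [|n IH]; rewrite <- tnorm_abs; auto; apply Rlt_le.
  - apply (abs_mul_lt_half 1 _ Q); [easy|lra| |now rewrite Rmult_1_l].
    split; [apply pos_INR|]; rewrite Rmult_1_r; exact (hratio O).
  - apply (abs_mul_lt_half (INR (u n)) _ Q); auto; [apply pos_INR|].
    split; [apply pos_INR|apply u_succ_le].
Qed.

Lemma IZR_of_tnorm_u_mul_lt x :
  tnorm x < c -> (forall n, tnorm (INR (u n) * x) < c) -> exists k, x = IZR k.
Proof.
  intros H0 Hn; destruct (tnorm_nearest_int x) as [k Hk].
  exists k; apply Rminus_diag_uniq, (eq_0_of_INR_mul_bounded _ c); intro n.
  apply Rle_trans with (INR (u n) * Rabs (x - IZR k)).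
  - apply Rmult_le_compat_r; [apply Rabs_pos|apply le_INR, le_u].
  - rewrite <- (Rabs_right (INR (u n))), <- Rabs_mult by (apply Rle_ge, pos_INR).
    apply Rlt_le, abs_u_mul_lt; [lra|]; intro m.
    now rewrite tnorm_INR_mul_sub_IZR.
Qed.

Lemma T_eq_0_of_rho_lt x : rho u x 0 < c -> T_eq x 0.
Proof.
  intro Hx; destruct (IZR_of_tnorm_u_mul_lt x) as [k ->].
  - pose proof (rho_0_ge u x O); pose proof (Rmax_l (tnorm x) (tnorm (INR (u O) * x))); lra.
  - intro n; pose proof (rho_0_ge u x n); pose proof (Rmax_r (tnorm x) (tnorm (INR (u n) * x))); lra.
  - exists k; ring.
Qed.

End BoundedRatios.

Theorem propositionB (u : nat -> nat)
  (hpos : forall n, (0 < u n)%nat)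
  (hinc : forall n, (u n < u (S n))%nat)
  (hQ : is_finite (Qu u)) :
  (forall x : R, rho u x 0 < 1 / (2 * real (Qu u)) <-> T_eq x 0) /\
  (forall x : R, exists eps : R, 0 < eps /\
     forall y : R, rho u x y < eps -> T_eq y x).
Proof.
  pose proof (fun n => ratio_le_Qu u n hQ) as hratio.
  pose proof (ratio_bound_pos u _ hpos hratio) as HQ.
  assert (Hc : 0 < 1 / (2 * real (Qu u))) by (apply Rdiv_lt_0_compat; lra).
  split.
  - intro x; split; [exact (T_eq_0_of_rho_lt u _ hpos hinc hratio x)|].
    intros [k Hk]; replace x with (IZR k) by lra; now rewrite rho_IZR_0.
  - intro x; exists (1 / (2 * real (Qu u))); split; [exact Hc|].
    intros y Hy; rewrite <- rho_sub_0 in Hy.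
    destruct (T_eq_0_of_rho_lt u _ hpos hinc hratio _ Hy) as [k Hk].
    exists (- k)%Z; rewrite opp_IZR; lra.
Qed.
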